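(* Let $Q$ be a commutative A-loop, let $n\ge 0$, and let $x\in Q$ satisfy $x^{2^n}=1$. Then $(xy)^{2^n}=y^{2^n}$ for every $y\in Q$.
   Context: A loop is a set with a binary operation and neutral element $1$ in which all left and right translations are bijections; $\mathrm{Inn}(Q)$ is the stabilizer of $1$ in the group generated by all translations. A commutative A-loop is a commutative loop all of whose inner mappings are automorphisms. Such loops are power-associative, so powers are unambiguous. *)

From mathcomp Require Import all_boot.
Set Implicit Arguments. Unset Strict Implicit. Unset Printing Implicit Defensive.

Section Loops.
Variables (T : Type) (mul : T -> T -> T) (one : T).

Definition is_loop : Prop :=
  (forall x, mul one x = x /\ mul x one = x) /\
  (forall a, bijective (mul a)) /\
  (forall a, bijective (fun x => mul x a)).

Definition Lt (a : T) : T -> T := mul a.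
Definition Rt (a : T) : T -> T := fun x => mul x a.

(* The multiplication group Mlt(Q): the group (under composition) generated
   by all translations L_a, R_a.
   The clauses [Mlt_Linv]/[Mlt_Rinv] express f = L_a^{-1} o g
   (resp. R_a^{-1} o g) without naming the inverse map. *)
Inductive Mlt : (T -> T) -> Prop :=
  | Mlt_id : Mlt id
  | Mlt_L a g : Mlt g -> Mlt (Lt a \o g)
  | Mlt_R a g : Mlt g -> Mlt (Rt a \o g)
  | Mlt_Linv a g f : Mlt g -> (forall x, Lt a (f x) = g x) -> Mlt f
  | Mlt_Rinv a g f : Mlt g -> (forall x, Rt a (f x) = g x) -> Mlt f.

Definition inner_mapping (f : T -> T) : Prop := Mlt f /\ f one = one.

Definition loop_automorphism (f : T -> T) : Prop :=
  bijective f /\ forall x y, f (mul x y) = mul (f x) (f y).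

Definition is_comm_Aloop : Prop :=
  is_loop /\ (forall x y, mul x y = mul y x) /\
  (forall f, inner_mapping f -> loop_automorphism f).

(* Powers: x^0 = 1, x^(n+1) = x * x^n (unambiguous by power-associativity). *)
Fixpoint lpow (x : T) (n : nat) : T :=
  match n with 0 => one | n'.+1 => mul x (lpow x n') end.

End Loops.

From mathcomp Require Import all_boot.
From Stdlib Require Import ClassicalEpsilon.

(* In a commutative A-loop the maps P_a = L_a L_{a^-1}^-1 satisfy the Bruck
   identity P_a P_b P_a = P_{P_a b}, so P_x^k = P_{x^k} and P_a = id when
   a^2 = 1.  For s = y^2 \ (xy)^2 the map P_s is conjugate to P_x^2; hence if
   x^(2^(k+1)) = 1 then P_s^(2^(k-1)) = id and s^(2^k) = P_s^(2^(k-1)) 1 = 1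
   (for k = 0, P_x = id already gives s = 1).
   Induction on k, applied to s and y^2, gives
   (xy)^(2^(k+1)) = (s y^2)^(2^k) = y^(2^(k+1)). *)

Set Implicit Arguments. Unset Strict Implicit. Unset Printing Implicit Defensive.

Lemma iter_conj (A : Type) (f g h h' : A -> A) :
  cancel h h' -> cancel h' h -> (forall z, f z = h' (g (h z))) ->
  forall n z, iter n f z = h' (iter n g (h z)).
Proof.
move=> hK h'K fE; elim=> [|n IHn] z /=; first by rewrite hK.
by rewrite IHn fE h'K.
Qed.

Section Loop.
Variables (T : Type) (mul : T -> T -> T) (one : T).
Hypothesis HL : is_loop mul one.

Definition ldiv (a b : T) : T := epsilon (inhabits b) (fun z => mul a z = b).
Definition inv (a : T) : T := ldiv a one.
Local Notation pw := (lpow mul one).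

Lemma mul1q x : mul one x = x. Proof. by case: HL => /(_ x)[]. Qed.
Lemma mulq1 x : mul x one = x. Proof. by case: HL => /(_ x)[]. Qed.

Lemma mul_ldiv a b : mul a (ldiv a b) = b.
Proof.
apply: (epsilon_spec (inhabits b) (fun z => mul a z = b)).
by case: HL => _ [/(_ a)[g _ gK] _]; exists (g b); rewrite gK.
Qed.

Lemma mulI a : injective (mul a).
Proof. by case: HL => _ [/(_ a)/bij_inj]. Qed.

Lemma ldiv_mul a b : ldiv a (mul a b) = b.
Proof. by apply: (@mulI a); rewrite mul_ldiv. Qed.

Lemma ldiv_eq a b c : mul a b = c -> ldiv a c = b.
Proof. by move<-; rewrite ldiv_mul. Qed.

Lemma ldiv1q a : ldiv one a = a. Proof. exact/ldiv_eq/mul1q. Qed.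
Lemma ldivqq a : ldiv a a = one. Proof. exact/ldiv_eq/mulq1. Qed.
Lemma mul_inv a : mul a (inv a) = one. Proof. exact: mul_ldiv. Qed.
Lemma inv1 : inv one = one. Proof. exact: ldiv1q. Qed.

Lemma Mlt_ext g f : Mlt mul g -> g =1 f -> Mlt mul f.
Proof. by move=> Hg gf; apply: (Mlt_Linv (a := one) Hg) => z; rewrite /Lt mul1q gf. Qed.

Lemma Mlt_idfun : Mlt mul idfun. Proof. exact: Mlt_id. Qed.

Lemma Mlt_mul a g : Mlt mul g -> Mlt mul (fun z => mul a (g z)).
Proof. by move=> Hg; apply: (Mlt_ext (Mlt_L a Hg)). Qed.

Lemma Mlt_ldiv a g : Mlt mul g -> Mlt mul (fun z => ldiv a (g z)).
Proof. by move=> Hg; apply: (Mlt_Linv (a := a) Hg) => z; rewrite /Lt mul_ldiv. Qed.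

Section Morphism.
Variable f : T -> T.
Hypotheses (fM : {morph f : x y / mul x y}) (f1 : f one = one).

Lemma morph_ldiv u v : f (ldiv u v) = ldiv (f u) (f v).
Proof. by symmetry; apply: ldiv_eq; rewrite -fM mul_ldiv. Qed.

Lemma morph_inv u : f (inv u) = inv (f u).
Proof. by rewrite /inv morph_ldiv f1. Qed.

Lemma morph_lpow a : f a = a -> forall k, f (pw a k) = pw a k.
Proof. by move=> fa; elim=> [|k IHk] //=; rewrite fM fa IHk. Qed.

End Morphism.

Section CommLoop.
Hypothesis mulC : commutative mul.

Lemma inv_mul a : mul (inv a) a = one. Proof. by rewrite mulC mul_inv. Qed.
Lemma invK : involutive inv. Proof. by move=> a; apply/ldiv_eq/inv_mul. Qed.
Lemma ldivV1 a : ldiv (inv a) one = a. Proof. exact/ldiv_eq/inv_mul. Qed.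

Section Aloop.
Hypothesis inner_aut : forall f, inner_mapping mul one f -> loop_automorphism mul f.

Lemma inner_morph f : Mlt mul f -> f one = one -> {morph f : x y / mul x y}.
Proof. by move=> Mf f1; case: (inner_aut (conj Mf f1)). Qed.

Definition Linner x y z := ldiv (mul x y) (mul x (mul y z)).

Lemma Linner1 x y : Linner x y one = one.
Proof. by rewrite /Linner mulq1 ldivqq. Qed.

Lemma Linner_morph x y : {morph Linner x y : u v / mul u v}.
Proof.
apply: inner_morph (Linner1 x y).
exact/Mlt_ldiv/Mlt_mul/Mlt_mul/Mlt_idfun.
Qed.

Lemma Linner_fixl x y : Linner x y x = x.
Proof. by rewrite /Linner [mul y x]mulC [mul x (mul x y)]mulC ldiv_mul. Qed.

(* With p = ab and y = p\a, the map L_{p,y} fixes p, sends y^-1 to b and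
   y\p^-1 to a^-1. *)
Lemma invM a b : inv (mul a b) = mul (inv a) (inv b).
Proof.
set p := mul a b; set y := ldiv p a.
have phiM := Linner_morph p y; have phi1 := Linner1 p y.
have py : mul p y = a by rewrite mul_ldiv.
have phi_invy : Linner p y (inv y) = b by rewrite /Linner mul_inv mulq1 py ldiv_mul.
have phi_ldiv : Linner p y (ldiv y (inv p)) = inv a.
  by rewrite /Linner mul_ldiv mul_inv py.
rewrite morph_inv // in phi_invy.
rewrite morph_ldiv // morph_inv // Linner_fixl -(invK (Linner p y y)) phi_invy in phi_ldiv.
by rewrite mulC -phi_ldiv mul_ldiv.
Qed.

Lemma ldiv_inv a b : inv (ldiv a b) = ldiv (inv a) (inv b).
Proof. by symmetry; apply: ldiv_eq; rewrite -invM mul_ldiv. Qed.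

(* L_x^-1 L_{x^-1}^-1 is an inner mapping fixing x^-1, hence it commutes
   with L_{x^-1}; this makes L_x and L_{x^-1} commute. *)
Lemma mul_mulV x z : mul x (mul (inv x) z) = mul (inv x) (mul x z).
Proof.
pose phi w := ldiv x (ldiv (inv x) w).
have phi1 : phi one = one by rewrite /phi ldivV1 ldivqq.
have phiM : {morph phi : u v / mul u v}.
  exact/inner_morph/phi1/Mlt_ldiv/Mlt_ldiv/Mlt_idfun.
have phi_invx : phi (inv x) = inv x by rewrite /phi ldivqq.
have phi_ldiv w : phi (mul (inv x) w) = ldiv x w by rewrite /phi ldiv_mul.
have := phi_ldiv (mul x (mul (inv x) z)).
rewrite phiM phi_invx ldiv_mul => /mulI phiE.
by rewrite -[in RHS]phiE /phi !mul_ldiv.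
Qed.

Lemma ldivV_mul y r : ldiv (inv y) (mul y r) = mul y (ldiv (inv y) r).
Proof. by apply: ldiv_eq; rewrite -mul_mulV mul_ldiv. Qed.

Lemma ldiv_mulV y r : ldiv y (mul (inv y) r) = mul (inv y) (ldiv y r).
Proof. by apply: ldiv_eq; rewrite mul_mulV mul_ldiv. Qed.

Definition P a z := mul a (ldiv (inv a) z).
Definition Pinv a z := mul (inv a) (ldiv a z).

Lemma PK a : cancel (Pinv a) (P a).
Proof. by move=> z; rewrite /P /Pinv ldiv_mul mul_ldiv. Qed.
Lemma PinvK a : cancel (P a) (Pinv a).
Proof. by move=> z; rewrite /P /Pinv ldiv_mul mul_ldiv. Qed.

Lemma P1 z : P one z = z. Proof. by rewrite /P inv1 ldiv1q mul1q. Qed.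
Lemma P_at1 a : P a one = mul a a. Proof. by rewrite /P ldivV1. Qed.
Lemma P_inv a : P (inv a) =1 Pinv a. Proof. by move=> z; rewrite /P /Pinv invK. Qed.

Lemma P_invol c z : mul c c = one -> P c z = z.
Proof. by move=> /ldiv_eq invc; rewrite /P [inv c]invc mul_ldiv. Qed.

(* Every g in Mlt(Q) is recovered from g 1 and the inner automorphism L_{g 1}^-1 g. *)
Lemma Mlt_polar g : Mlt mul g -> forall z, g z = P (g one) (inv (g (inv z))).
Proof.
move=> Mg z; set c := g one; pose h w := ldiv c (g w).
have h1 : h one = one by rewrite /h ldivqq.
have hM : {morph h : u v / mul u v} by exact/inner_morph/h1/Mlt_ldiv.
have gE w : g w = mul c (h w) by rewrite /h mul_ldiv.
by rewrite [g (inv z)]gE invM (morph_inv hM h1) invK /P ldiv_mul -gE.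
Qed.

Lemma P_mul a b w : P (mul b a) w = mul b (P a (ldiv (inv b) w)).
Proof.
pose g z := mul b (mul a z).
have Mg : Mlt mul g by exact/Mlt_mul/Mlt_mul/Mlt_idfun.
have := Mlt_polar Mg (ldiv (inv a) (ldiv (inv b) w)).
by rewrite /g mulq1 !invM !invK !mul_ldiv => <-.
Qed.

Lemma mul_sqr_invol x y : mul x x = one -> mul (mul x y) (mul x y) = mul y y.
Proof. by move=> xx; rewrite -P_at1 [mul x y]mulC P_mul ldivV1 P_invol. Qed.

Lemma Bruck a b z : P a (P b (P a z)) = P (P a b) z.
Proof.
pose g w := mul a (ldiv (inv a) (mul b w)).
have Mg : Mlt mul g by exact/Mlt_mul/Mlt_ldiv/Mlt_mul/Mlt_idfun.
have := Mlt_polar Mg (ldiv (inv b) (P a z)).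
rewrite /g mulq1 invM ldiv_inv invM !invK mul_ldiv => E.
by rewrite -[in RHS](PinvK a z) /Pinv -E.
Qed.

Lemma P_sqr a z : P (mul a a) z = P a (P a z).
Proof. by rewrite -P_at1 -Bruck P1. Qed.

Lemma Pinv_sqr a z : Pinv (mul a a) z = Pinv a (Pinv a z).
Proof. by rewrite -[LHS](PinvK a) -(PinvK a (P a _)) -P_sqr PK. Qed.

Lemma lpowD x i j : mul (pw x i) (pw x j) = pw x (i + j).
Proof.
elim: i => [|i IHi] /=; first by rewrite mul1q.
have fixE := morph_lpow (Linner_morph x (pw x i)) (Linner1 _ _) (Linner_fixl _ _) j.
by rewrite -IHi -[RHS](mul_ldiv (mul x (pw x i))) -/(Linner _ _ _) fixE.
Qed.

Lemma lpow_sqr x m : pw (mul x x) m = pw x (2 * m).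
Proof.
elim: m => [|m IHm] //.
have sqrE : mul x x = pw x 2 by rewrite /= mulq1.
by rewrite [LHS]/= IHm sqrE lpowD mulnS.
Qed.

Lemma inv_lpowS x k : mul (inv x) (pw x k.+1) = pw x k.
Proof.
pose f w := mul (inv x) (mul x w).
have f1 : f one = one by rewrite /f mulq1 inv_mul.
have fM : {morph f : u v / mul u v} by exact/inner_morph/f1/Mlt_mul/Mlt_mul/Mlt_idfun.
have fx : f x = x by rewrite /f -mul_mulV inv_mul mulq1.
exact: (morph_lpow fM f1 fx k).
Qed.

Lemma P_lpow x k : P x (pw x k) = pw x k.+2.
Proof. by rewrite /P (ldiv_eq (inv_lpowS x k)). Qed.

Lemma iter_P x k z : iter k (P x) z = P (pw x k) z.
Proof.
elim/ltn_ind: k z => -[|[|k]] IHk z; first by rewrite P1.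
  by rewrite /= mulq1.
by rewrite iterS iterSr IHk // Bruck P_lpow.
Qed.

Lemma iter_P1 a m : iter m (P a) one = pw a (2 * m).
Proof. by rewrite iter_P P_at1 lpowD addnn mul2n. Qed.

Lemma Bruck_Pinv x u z (v := ldiv (inv x) u) :
  P x (P u (P x (Pinv u z))) = mul v (P x (P x (ldiv v z))).
Proof.
have uE : u = mul v (inv x) by rewrite mulC mul_ldiv.
have PxuE : P x u = mul v x by rewrite /P -/v mulC.
have PinvE : Pinv u z = mul (inv v) (P x (ldiv v z)).
  apply: (can_inj (PinvK u)); rewrite PK [in P u _]uE P_mul ldiv_mul P_inv.
  by rewrite PinvK mul_ldiv.
by rewrite Bruck PxuE P_mul PinvE ldiv_mul.
Qed.

Section SquareQuotient.
Variables x y : T.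
Let b := mul y y.
Let s := ldiv b (mul (mul x y) (mul x y)).
Let v := ldiv (inv x) y.

(* P_s is conjugate to P_x^2 = P_{x^2}. *)
Lemma P_sqr_quotient z :
  P s z = ldiv b (mul y (mul v (P (mul x x) (ldiv v (ldiv y (mul b z)))))).
Proof.
have PsE w : P s w = ldiv b (P (mul (mul x y) (mul x y)) (Pinv b (mul b w))).
  rewrite -[mul (mul x y) _](mul_ldiv b) -/s /Pinv ldiv_mul P_mul.
  by rewrite ldiv_mul !ldiv_mul.
rewrite PsE !P_sqr Pinv_sqr [mul x y]mulC !P_mul /Pinv !ldiv_mul.
by rewrite ldiv_mulV ldivV_mul -/(P y _) -/(Pinv y _) Bruck_Pinv.
Qed.

Lemma lpow_sqr_quotient M : pw x (4 * M) = one -> pw s (2 * M) = one.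
Proof.
move=> x4M; have x2M_invol : mul (pw x (2 * M)) (pw x (2 * M)) = one.
  by rewrite lpowD -mulnDl.
pose h z := ldiv v (ldiv y (mul b z)); pose h' w := ldiv b (mul y (mul v w)).
have hK : cancel h h' by move=> z; rewrite /h /h' !mul_ldiv ldiv_mul.
have h'K : cancel h' h by move=> w; rewrite /h /h' mul_ldiv !ldiv_mul.
by rewrite -iter_P1 (iter_conj hK h'K P_sqr_quotient) iter_P lpow_sqr P_invol.
Qed.

End SquareQuotient.

Lemma lpow2n_mul k x y : pw x (2 ^ k) = one -> pw (mul x y) (2 ^ k) = pw y (2 ^ k).
Proof.
elim: k x y => [|k IHk] x y; first by rewrite /= !mulq1 => ->; rewrite mul1q.
move=> x2k; set b := mul y y; set s := ldiv b (mul (mul x y) (mul x y)).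
have s2k : pw s (2 ^ k) = one.
  case: k {IHk} x2k => [|j] x2k.
    rewrite expn1 /= mulq1 in x2k.
    by rewrite /s /b mul_sqr_invol // ldivqq expn0 /= mulq1.
  by rewrite expnS lpow_sqr_quotient // [4 * _](_ : _ = 2 ^ j.+2) // !expnS mulnA.
have sb : mul s b = mul (mul x y) (mul x y) by rewrite mulC mul_ldiv.
by rewrite !expnS -!lpow_sqr -(IHk s b s2k) sb.
Qed.

End Aloop.
End CommLoop.
End Loop.

Theorem proposition5p5 (T : Type) (mul : T -> T -> T) (one : T)
  (HQ : is_comm_Aloop mul one) (n : nat) (x : T)
  (hx : lpow mul one x (2 ^ n) = one) :
  forall y : T, lpow mul one (mul x y) (2 ^ n) = lpow mul one y (2 ^ n).
Proof. by case: HQ => HL [mulC inner_aut] y; apply: lpow2n_mul. Qed.
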